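(* For every $n \geq 6$, $c(\Gamma_n) \leq \left\lceil \frac{n}{3} \right\rceil$.
   Context: The Fibonacci cube $\Gamma_n$ is the subgraph of the hypercube $Q_n$ (vertex set $\{0,1\}^n$, adjacency = differing in exactly one position) induced by all binary strings of length $n$ containing no two consecutive 1's. Cops and Robbers: $k$ cops choose starting vertices, then the robber does; in each round all cops move (to a neighbor or stay), then the robber moves (to a neighbor or stays); cops win if some cop occupies the robber's vertex. The cop number $c(G)$ is the minimum $k$ for which the cops can guarantee capture. *)

From mathcomp Require Import all_boot.
Set Implicit Arguments.
Unset Strict Implicit.
Unset Printing Implicit Defensive.

Section CopsRobbers.
Variables (T : finType) (e : rel T) (k : nat).

Definition config := {ffun 'I_k -> T}.

Definition step (x y : T) : Prop := y = x \/ e x y.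

Definition caught (c : config) (r : T) : Prop := exists i, c i = r.

(* [cops_win c r]: in the position where the cops are at [c], the robber is
   at [r] and it is the cops' turn, the cops can force a capture
   (least fixed point = capture in finitely many rounds, which for a
   finite game is the same as guaranteeing capture). *)
Inductive cops_win : config -> T -> Prop :=
| CopsWin (c : config) (r : T) (c' : config) :
    (forall i, step (c i) (c' i)) ->
    (caught c' r \/
     (forall r', step r r' -> ~ caught c' r' -> cops_win c' r')) ->
    cops_win c r.

Definition k_cops_win : Prop :=
  exists c0 : config, forall r0 : T, caught c0 r0 \/ cops_win c0 r0.

End CopsRobbers.

Definition cop_number_le (T : finType) (e : rel T) (m : nat) : Prop :=
  exists2 k, k <= m & k_cops_win e k.

Definition fib_string (n : nat) (x : {ffun 'I_n -> bool}) : bool :=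
  [forall i : 'I_n, forall j : 'I_n, (val j == (val i).+1) ==> ~~ (x i && x j)].

Definition fib_vertex (n : nat) := {x : {ffun 'I_n -> bool} | fib_string x}.

Definition fib_adj (n : nat) : rel (fib_vertex n) :=
  fun x y => #|[set i : 'I_n | val x i != val y i]| == 1.

From mathcomp Require Import all_boot zify.

Set Implicit Arguments.
Unset Strict Implicit.
Unset Printing Implicit Defensive.

(* Cut the positions into blocks {3m, 3m+1, 3m+2} and let cop m chase the
   shadow of the robber: the robber's string with block m cleared, which is
   again a Fibonacci string.  Every robber move shifts each shadow by at most
   one step and leaves the shadow of its own block fixed, so the chasing cops
   never fall behind and the cop of that block gains a step.  Once every cop
   sits on its shadow, cop m is at distance (number of 1s of the robber in
   block m); two 1s in a block of a Fibonacci string must be its two ends, so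
   two consecutive blocks cannot both carry two 1s and some cop is at
   distance at most one. *)

Lemma ltn_sum (I : finType) (F G : I -> nat) (i0 : I) :
  (forall i, i != i0 -> F i <= G i) -> F i0 < G i0 ->
  \sum_i F i < \sum_i G i.
Proof.
move=> leFG ltFG; rewrite (bigD1 i0) //= [X in _ < X](bigD1 i0) //= -addSn.
by apply: leq_add => //; apply: leq_sum => i /leFG.
Qed.

Section Potential.
Variables (T : finType) (e : rel T) (k : nat).
Implicit Types (c : config T k) (r : T).

Lemma cops_win_adj c r i : e (c i) r -> cops_win e c r.
Proof.
move=> cir; apply: (@CopsWin _ _ _ c r [ffun j => if j == i then r else c j]).
  by move=> j; rewrite ffunE; case: eqP => [->|_]; [right | left].
by left; exists i; rewrite ffunE eqxx.
Qed.

Variables (strategy : config T k -> T -> config T k) (phi : config T k -> T -> nat).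
Hypothesis strategy_step : forall c r i, step e (c i) (strategy c r i).
Hypothesis strategy_progress : forall c r r', step e r r' -> ~ caught (strategy c r) r' ->
  phi (strategy c r) r' < phi c r \/ exists i, e (strategy c r i) r'.

Lemma cops_win_potential c r : cops_win e c r.
Proof.
move: {2}(phi c r).+1 (ltnSn (phi c r)) => N.
elim: N c r => // N IH c r lt_phi.
apply: (CopsWin (strategy_step c r)); right => r' rr' uncaught.
case: (strategy_progress rr' uncaught) => [lt_phi' | [i adj]].
  by apply: IH; exact: leq_trans lt_phi' lt_phi.
exact: cops_win_adj adj.
Qed.

End Potential.

Section Hamming.
Variables (I : finType) (T : eqType).
Implicit Types (x y z : {ffun I -> T}).

Definition hamming x y := #|[set i | x i != y i]|.

Lemma hamming_eq0 x y : (hamming x y == 0) = (x == y).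
Proof.
rewrite cards_eq0; apply/eqP/eqP => [dxy | ->].
  by apply/ffunP => i; apply/eqP/negPn; move/setP: dxy => /(_ i); rewrite !inE => ->.
by apply/setP => i; rewrite !inE eqxx.
Qed.

Lemma hamming_xx x : hamming x x = 0.
Proof. by apply/eqP; rewrite hamming_eq0. Qed.

Lemma hamming_triangle x y z : hamming x z <= hamming x y + hamming y z.
Proof.
apply: leq_trans (leq_card_setU _ _); apply: subset_leq_card.
apply/subsetP => i; rewrite !inE; apply: contraLR.
by rewrite negb_or !negbK => /andP [/eqP -> /eqP ->].
Qed.

Lemma diff1_eq x y j i : [set i | x i != y i] = [set j] -> i != j -> x i = y i.
Proof.
move=> /setP /(_ i) dxy ij; apply/eqP/negbFE.
by move: dxy; rewrite !inE (negbTE ij).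
Qed.

Definition upd x k b : {ffun I -> T} := [ffun i => if i == k then b else x i].

Lemma hamming_upd x k b : hamming x (upd x k b) = (x k != b).
Proof.
rewrite /hamming (cardsD1 k) !inE ffunE eqxx -[RHS]addn0; congr (_ + _).
apply/eqP; rewrite cards_eq0; apply/eqP/setP => i; rewrite !inE ffunE.
by case: eqP => //= _; rewrite eqxx.
Qed.

Lemma hamming_upd_toward x y k :
  x k != y k -> hamming (upd x k (y k)) y = (hamming x y).-1.
Proof.
move=> xyk; rewrite /hamming (cardsD1 k [set i | x i != y i]) inE xyk /=.
apply: eq_card => i; rewrite !inE ffunE.
by case: (i =P k) => [->|]; rewrite ?eqxx.
Qed.

End Hamming.

Section Fibonacci.
Variable n : nat.
Local Notation word := {ffun 'I_n -> bool}.
Local Notation V := (fib_vertex n).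
Implicit Types (x y : word) (u v : V).

Lemma fib_stringP x :
  reflect (forall a b : 'I_n, x a -> x b -> b != a.+1 :> nat) (fib_string x).
Proof.
apply: (iffP forallP) => [fx a b xa xb | fx a].
  by have := forallP (fx a) b; rewrite xa xb implybF.
apply/forallP => b; apply/implyP => /eqP ba; apply/negP => /andP [xa xb].
by move: (fx a b xa xb); rewrite ba eqxx.
Qed.

Lemma fib_string_sub x y : (forall i, y i -> x i) -> fib_string x -> fib_string y.
Proof. by move=> yx /fib_stringP fx; apply/fib_stringP => a b /yx xa /yx; exact: fx. Qed.

Lemma fib_string_set x (k : 'I_n) : fib_string x ->
  (forall a : 'I_n, (a == k.+1 :> nat) || (k == a.+1 :> nat) -> ~~ x a) ->
  fib_string (upd x k true).
Proof.
move=> /fib_stringP fx free_k; apply/fib_stringP => a b; rewrite !ffunE.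
case: (eqVneq a k) => [->|ak]; case: (eqVneq b k) => [->|bk] //.
- by move=> _ _; lia.
- move=> _ xb; apply: contraTneq xb => bk1.
  by apply: free_k; rewrite bk1 eqxx.
- move=> xa _; apply: contraTneq xa => ka.
  by apply: free_k; rewrite ka eqxx orbT.
- exact: fx.
Qed.

(* If u has a 1 where v has a 0, clear it.  Otherwise the 1s of u are 1s of
   v, so a 1 copied from v has no neighbouring 1 in u. *)
Lemma fib_geodesic_step u v : u != v ->
  exists k, (val u k != val v k) && fib_string (upd (val u) k (val v k)).
Proof.
move=> neq_uv.
case: (pickP [pred k | val u k && ~~ val v k]) => [j /andP [uj vj] | no_surplus].
  exists j; rewrite uj (negbTE vj) /=.
  by apply: fib_string_sub (valP u) => i; rewrite ffunE; case: (i == j).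
have sub_uv a : val u a -> val v a.
  by move=> ua; move: (no_surplus a) => /=; rewrite ua => /negbFE.
case: (pickP [pred k | val u k != val v k]) => [k /= uvk | same]; last first.
  by case/eqP: neq_uv; apply/val_inj/ffunP => i; apply/eqP/negbFE/same.
have [uk vk] : val u k = false /\ val v k = true.
  by move: (no_surplus k) uvk => /=; case: (val u k); case: (val v k).
exists k; rewrite uvk vk /=; apply: fib_string_set (valP u) _ => a near.
apply/negP => /sub_uv va; have /fib_stringP fv := valP v.
by case/orP: near => /eqP ak; [move: (fv k a vk va) | move: (fv a k va vk)];
  rewrite ak eqxx.
Qed.

Definition toward u v : V :=
  if [pick k | (val u k != val v k) && fib_string (upd (val u) k (val v k))]
    is Some k then insubd u (upd (val u) k (val v k)) else u.

Lemma towardP u v : step (@fib_adj n) u (toward u v) /\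
  hamming (val (toward u v)) (val v) = (hamming (val u) (val v)).-1.
Proof.
rewrite /toward; case: pickP => [k /andP [uvk fw] | none].
  rewrite insubdK //; split; last exact: hamming_upd_toward.
  by right; rewrite /fib_adj /= -/(hamming _ _) insubdK // hamming_upd uvk.
case: (eqVneq u v) => [->|neq_uv]; first by split; [left | rewrite hamming_xx].
by have [k] := fib_geodesic_step neq_uv; rewrite none.
Qed.

Definition shadow (m : nat) x : word := [ffun i => x i && (i %/ 3 != m)].

Definition block_weight (m : nat) x := #|[set i : 'I_n | (i %/ 3 == m) && x i]|.

Lemma fib_string_shadow m x : fib_string x -> fib_string (shadow m x).
Proof. by apply: fib_string_sub => i; rewrite ffunE => /andP []. Qed.

Definition shadowV m u : V := Sub (shadow m (val u)) (fib_string_shadow m (valP u)).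

Lemma hamming_shadow m x : hamming (shadow m x) x = block_weight m x.
Proof.
apply: eq_card => i; rewrite !inE ffunE.
by case: (x i); case: (_ == m).
Qed.

Lemma hamming_shadow_le m x y : hamming (shadow m x) (shadow m y) <= hamming x y.
Proof.
apply: subset_leq_card; apply/subsetP => i; rewrite !inE !ffunE.
by case: (x i); case: (y i); case: (_ == m).
Qed.

Lemma shadow_diff1 x y j : [set i | x i != y i] = [set j] ->
  shadow (j %/ 3) x = shadow (j %/ 3) y.
Proof.
move=> dxy; apply/ffunP => i; rewrite !ffunE.
case: (eqVneq i j) => [->|ij]; first by rewrite eqxx !andbF.
by rewrite (diff1_eq dxy ij).
Qed.

Lemma block_weight_diff1_other x y j m : [set i | x i != y i] = [set j] ->
  j %/ 3 != m -> block_weight m x = block_weight m y.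
Proof.
move=> dxy jm; apply: eq_card => i; rewrite !inE.
case: (eqVneq i j) => [->|ij]; first by rewrite (negbTE jm).
by rewrite (diff1_eq dxy ij).
Qed.

Lemma block_weight_diff1 x y j : [set i | x i != y i] = [set j] -> x j ->
  block_weight (j %/ 3) x = (block_weight (j %/ 3) y).+1.
Proof.
move=> dxy xj; have yj : y j = false.
  by move/setP: dxy => /(_ j); rewrite !inE eqxx xj; case: (y j).
rewrite /block_weight (_ : [set i | _ && x i] = j |: [set i : 'I_n | (i %/ 3 == j %/ 3) && y i]).
  by rewrite cardsU1 inE yj andbF.
apply/setP => i; rewrite !inE.
case: (eqVneq i j) => [->|ij]; first by rewrite eqxx xj.
by rewrite (diff1_eq dxy ij).
Qed.

Lemma fib_block_weight_le2 u m : block_weight m (val u) <= 2.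
Proof.
rewrite leqNgt; apply/card_gt2P => -[a [b [c [[]]]]]; rewrite !inE.
move=> /andP [/eqP am ua] /andP [/eqP bm ub] /andP [/eqP cm uc].
rewrite -!(inj_eq val_inj) /= => -[ab bc ca].
have /fib_stringP fu := valP u.
move: (fu _ _ ua ub) (fu _ _ ub ua) (fu _ _ ua uc) (fu _ _ uc ua)
  (fu _ _ ub uc) (fu _ _ uc ub).
lia.
Qed.

Lemma fib_heavy_blocks u m :
  1 < block_weight m (val u) -> 1 < block_weight m.+1 (val u) -> False.
Proof.
move=> /card_gt1P [a [b [+ + ab]]] /card_gt1P [c [d [+ + cd]]]; rewrite !inE.
move=> /andP [/eqP am ua] /andP [/eqP bm ub] /andP [/eqP cm uc] /andP [/eqP dm ud].
move: ab cd; rewrite -!(inj_eq val_inj) /= => ab cd.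
have /fib_stringP fu := valP u.
move: (fu _ _ ua ub) (fu _ _ ub ua) (fu _ _ ua uc) (fu _ _ uc ua)
  (fu _ _ ub uc) (fu _ _ uc ub) (fu _ _ ua ud) (fu _ _ ud ua)
  (fu _ _ ub ud) (fu _ _ ud ub) (fu _ _ uc ud) (fu _ _ ud uc).
lia.
Qed.

Lemma fib_block_weight_diff1 u v j : [set i | val u i != val v i] = [set j] ->
  1 < block_weight (j %/ 3) (val u) -> 1 < block_weight (j %/ 3) (val v) -> False.
Proof.
wlog uj : u v / val u j => [gen duv | duv _ heavy].
  case uj: (val u j); first exact: gen.
  have dvu : [set i | val v i != val u i] = [set j].
    by rewrite -duv; apply/setP => i; rewrite !inE eq_sym.
  have vj : val v j by move/setP: duv => /(_ j); rewrite !inE eqxx uj; case: (val v j).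
  by move=> hu hv; exact: gen vj dvu hv hu.
have := fib_block_weight_le2 u (j %/ 3).
by rewrite (block_weight_diff1 duv uj) ltnS leqNgt heavy.
Qed.

End Fibonacci.

(* The lag l of a cop, plus one unless the cop sits on its shadow while the
   robber has two 1s in its block.  A robber move inside the block that leaves
   the lag at 0 must raise the block weight to two, and then this unit is
   lost. *)
Definition cost (l w : nat) := l + ~~ ((l == 0) && (1 < w)).

Lemma cost_le l l' w : l' <= l -> cost l' w <= cost l w.
Proof. by rewrite /cost; case: l' => [|l']; case: l => [|l] //=; lia. Qed.

Lemma cost_lt l l' w w' : l' < l -> cost l' w' < cost l w.
Proof. by rewrite /cost; case: l' => [|l']; case: l => [|l] //=; lia. Qed.

Section Chase.
Variables (n K : nat).
Hypothesis block_lt : forall j : 'I_n, j %/ 3 < K.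
Hypothesis K_gt1 : 1 < K.
Local Notation V := (fib_vertex n).
Local Notation cfg := (config V K).
Implicit Types (c : cfg) (r : V).

Definition chase c r : cfg := [ffun i => toward (c i) (shadowV i r)].

(* The distance to its shadow that cop i keeps after its next chasing move. *)
Definition lag c r (i : 'I_K) := (hamming (val (c i)) (shadow i (val r))).-1.

Definition potential c r := \sum_i cost (lag c r i) (block_weight i (val r)).

Lemma chase_step c r i : step (@fib_adj n) (c i) (chase c r i).
Proof. by rewrite ffunE; exact: (towardP _ _).1. Qed.

Lemma hamming_chase c r i : hamming (val (chase c r i)) (shadow i (val r)) = lag c r i.
Proof. by rewrite ffunE (towardP _ _).2. Qed.

Lemma lag_chase_le c r r' i : hamming (val r) (val r') <= 1 ->
  lag (chase c r) r' i <= lag c r i.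
Proof.
move=> d_rr'; rewrite -(hamming_chase c r i) /lag -subn1 leq_subLR.
apply: leq_trans (hamming_triangle _ (shadow i (val r)) _) _.
by rewrite addnC leq_add2r; exact: leq_trans (hamming_shadow_le _ _ _) d_rr'.
Qed.

Lemma lag_chase_shadow c r r' (i : 'I_K) : shadow i (val r) = shadow i (val r') ->
  lag (chase c r) r' i = (lag c r i).-1.
Proof. by move=> same; rewrite /lag -same hamming_chase. Qed.

Lemma chase_stay c r : ~ caught (chase c r) r ->
  potential (chase c r) r < potential c r \/ exists i, fib_adj (chase c r i) r.
Proof.
move=> uncaught.
case: (pickP [pred i | 0 < lag c r i]) => [i /= lag_i | lag0].
  left; apply: (ltn_sum (i0 := i)) => [j _|].
    by apply: cost_le; rewrite lag_chase_shadow // leq_pred.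
  by apply: cost_lt; rewrite lag_chase_shadow // ltn_predL.
have at_shadow i : val (chase c r i) = shadow i (val r).
  by apply/eqP; rewrite -hamming_eq0 hamming_chase -leqn0 leqNgt; exact: negbT (lag0 i).
have [i light] : exists i : 'I_K, block_weight i (val r) <= 1.
  case: (leqP (block_weight 0 (val r)) 1) => [l0 | h0].
    by exists (Ordinal (ltnW K_gt1)).
  case: (leqP (block_weight 1 (val r)) 1) => [l1 | h1]; first by exists (Ordinal K_gt1).
  by case: (fib_heavy_blocks h0 h1).
right; exists i; rewrite /fib_adj -/(hamming _ _) at_shadow hamming_shadow.
rewrite eqn_leq light lt0n; apply/negP => /eqP bw0.
by apply: uncaught; exists i; apply/val_inj/eqP; rewrite -hamming_eq0 at_shadow hamming_shadow bw0.
Qed.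

Lemma chase_move c r r' : fib_adj r r' -> ~ caught (chase c r) r' ->
  potential (chase c r) r' < potential c r \/ exists i, fib_adj (chase c r i) r'.
Proof.
move=> adj uncaught; have [j drr'] := cards1P adj.
pose m : 'I_K := Ordinal (block_lt j).
have lag_m : lag (chase c r) r' m = (lag c r m).-1.
  exact/lag_chase_shadow/(shadow_diff1 drr').
have cost_other i : i != m ->
    cost (lag (chase c r) r' i) (block_weight i (val r')) <=
    cost (lag c r i) (block_weight i (val r)).
  move=> im; rewrite -(block_weight_diff1_other drr'); last first.
    by apply: contra im => /eqP ji; apply/eqP/val_inj; rewrite /= ji.
  by apply/cost_le/lag_chase_le; rewrite leq_eqVlt; apply/orP; left.
case: (posnP (lag c r m)) => [lag0 | lag_pos]; last first.
  by left; apply: (ltn_sum (i0 := m)) => //; apply: cost_lt; rewrite lag_m ltn_predL.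
have at_shadow : val (chase c r m) = shadow m (val r').
  by apply/eqP; rewrite -hamming_eq0 -(shadow_diff1 drr') hamming_chase lag0.
case: (ltngtP (block_weight m (val r')) 1) => [w0 | heavy | w1].
- case: uncaught; exists m; apply/val_inj/eqP.
  by rewrite -hamming_eq0 at_shadow hamming_shadow -leqn0.
- have light : block_weight m (val r) <= 1.
    by rewrite leqNgt; apply/negP => h; exact: fib_block_weight_diff1 drr' h heavy.
  left; apply: (ltn_sum (i0 := m)) => //.
  by rewrite lag_m lag0 /cost /= heavy; move: light; rewrite leqNgt => /negbTE ->.
- by right; exists m; rewrite /fib_adj -/(hamming _ _) at_shadow hamming_shadow w1.
Qed.

Lemma chase_wins c r : cops_win (@fib_adj n) c r.
Proof.
apply: (cops_win_potential (strategy := chase) (phi := potential)).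
  exact: chase_step.
by move=> {}c {}r r' [-> | adj]; [exact: chase_stay | exact: chase_move].
Qed.

End Chase.

Lemma fib_string_zero n : fib_string [ffun _ : 'I_n => false].
Proof. by apply/fib_stringP => a b; rewrite ffunE. Qed.

Theorem theorem4p2 (n : nat) : 6 <= n ->
  cop_number_le (@fib_adj n) ((n + 2) %/ 3).
Proof.
move=> n_ge6; exists ((n + 2) %/ 3) => //.
exists [ffun _ => Sub _ (fib_string_zero n)] => r0; right.
by apply: chase_wins => [j|]; [have := ltn_ord j |]; lia.
Qed.
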